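(* Let $a<b$ and let $f:[a,b]\rightarrow\mathbb{R}$ be a differentiable mapping in $(a,b)$ such that $f'\in L^1[a,b]$ and $\gamma\le f'(x)\le \Gamma$ for all $x\in [a,b]$, where $\gamma,\Gamma$ are real constants. Put $S=\frac{f(b)-f(a)}{b-a}$. Then for all $x\in[a,\frac{a+b}{2}]$, \[ \left|\frac{f(x)+f(a+b-x)}{2}-\frac{1}{b-a}\int_{a}^{b}f(t)\,dt\right|\leq \left[\frac{b-a}{4}+\left|x-\frac{3a+b}{4}\right|\right] (S-\gamma) \] and \[ \left|\frac{f(x)+f(a+b-x)}{2}-\frac{1}{b-a}\int_{a}^{b}f(t)\,dt\right|\leq \left[\frac{b-a}{4}+\left|x-\frac{3a+b}{4}\right|\right] (\Gamma-S). \] Moreover, if $\gamma=\inf_{t\in [a,b]}f'(t)$ and $\Gamma=\sup_{t\in [a,b]}f'(t)$, then the constant $\frac14$ (the coefficient of $b-a$ in the bracket) in each of these two inequalities is sharp, in the sense that it cannot be replaced by a smaller constant. *)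

From HB Require Import structures.
From mathcomp Require Import all_boot all_order all_algebra.
From mathcomp Require Import all_classical all_reals all_analysis.
Set Implicit Arguments. Unset Strict Implicit. Unset Printing Implicit Defensive.
Import Order.TTheory GRing.Theory Num.Theory.
Import numFieldNormedType.Exports.
Local Open Scope classical_set_scope.
Local Open Scope ring_scope.

Definition thm_hyp (R : realType) (a b : R) (f : R -> R) (gamma Gamma : R) : Prop :=
  [/\ a < b,
      {within `[a, b], continuous f},
      (forall x, a < x < b -> derivable f x 1),
      lebesgue_measure.-integrable `[a, b] (EFin \o (derive1 f)) &
      (forall x, a < x < b -> gamma <= (derive1 f) x <= Gamma)].

Definition slopeS (R : realType) (a b : R) (f : R -> R) : R := (f b - f a) / (b - a).

Definition devi (R : realType) (a b : R) (f : R -> R) (x : R) : R :=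
  `| (f x + f (a + b - x)) / 2 - (b - a)^-1 * Rintegral lebesgue_measure `[a, b] f |.

(* the bracket with the constant c in place of 1/4 *)
Definition brack (R : realType) (c a b x : R) : R :=
  c * (b - a) + `| x - (3 * a + b) / 4 |.

Definition infD (R : realType) (a b : R) (f : R -> R) : R :=
  inf [set (derive1 f) t | t in `]a, b[].
Definition supD (R : realType) (a b : R) (f : R -> R) : R :=
  sup [set (derive1 f) t | t in `]a, b[].

From HB Require Import structures.
From mathcomp Require Import all_boot all_order all_algebra.
From mathcomp Require Import all_classical all_reals all_analysis.
From mathcomp Require Import ring lra.
Import Order.TTheory GRing.Theory Num.Theory.
Import numFieldNormedType.Exports.
Local Open Scope classical_set_scope.
Local Open Scope ring_scope.

(* Put g := s f - k id with (s, k) = (1, gamma) or (-1, -Gamma).  The bounds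
   on f' make g nondecreasing, and since the quadrature (g x + g (a + b - x))/2
   is exact on affine functions, g has the same deviation as f, while its
   secant slope is S - gamma, resp. Gamma - S.  For a nondecreasing g, split
   [a, b] at x <= y := a + b - x and bound the integral over each of the three
   blocks by the values of g at its ends: the deviation becomes a nonnegative
   combination of the increments of g, at most
   ((b - a)/4 + |x - (3a + b)/4|) (g b - g a) / (b - a).
   Sharpness: t |-> t^n on [0, 1] at x = 0 has deviation 1/2 - 1/(n+1),
   secant slope 1 and 0 <= inf f' <= 1, which excludes every constant
   c < 1/4 once n is large; t |-> -t^n does the same for the second bound. *)

Section interval_integrals.
Context {R : realType}.
Notation mu := (@lebesgue_measure R).

Lemma continuous_cc_integrable {g : R -> R} {u v : R} :
  {within `[u, v], continuous g} -> mu.-integrable `[u, v] (EFin \o g).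
Proof. by move=> cg; apply: continuous_compact_integrable => //; exact: segment_compact. Qed.

Lemma Rintegral_cst_cc (c u v : R) : u <= v ->
  \int[mu]_(t in `[u, v]) c = c * (v - u).
Proof.
move=> uv; rewrite Rintegral_cst //= lebesgue_measure_itv /= lte_fin.
by case: ltgtP uv => // -> _; rewrite subrr mulr0.
Qed.

Lemma Rintegral_cc_bounds (g : R -> R) u v lo hi : u <= v ->
  {within `[u, v], continuous g} ->
  (forall t, u <= t <= v -> lo <= g t <= hi) ->
  lo * (v - u) <= \int[mu]_(t in `[u, v]) g t <= hi * (v - u).
Proof.
move=> uv cg gb; have ig := continuous_cc_integrable cg.
have ic (c : R) : mu.-integrable `[u, v] (EFin \o (fun=> c)).
  by apply: continuous_cc_integrable; apply: continuous_subspaceT => ?; exact: cvg_cst.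
by apply/andP; split; rewrite -Rintegral_cst_cc //; apply: le_Rintegral => //= t;
  rewrite in_itv /= => /gb /andP[].
Qed.

Lemma Rintegral_cc_split {g : R -> R} {u w v : R} : u <= w -> w <= v ->
  {within `[u, v], continuous g} ->
  \int[mu]_(t in `[u, v]) g t =
    \int[mu]_(t in `[u, w]) g t + \int[mu]_(t in `[w, v]) g t.
Proof.
move=> uw wv cg; have ig := continuous_cc_integrable cg.
have := @Rintegral_itvB R g (BLeft u) (BRight v) w ig.
rewrite !bnd_simp => /(_ uw wv).
rewrite Rintegral_itv_obnd_cbnd; last first.
  by apply: integrableS ig => //; apply: subset_itvr; rewrite bnd_simp.
by move=> <-; rewrite addrC subrK.
Qed.

Lemma Rintegral_cc_exprn (u v : R) n : u < v ->
  \int[mu]_(t in `[u, v]) t ^+ n = (v ^+ n.+1 - u ^+ n.+1) / n.+1%:R.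
Proof.
move=> uv; pose F t : R := n.+1%:R^-1 * t ^+ n.+1.
have dF x : derivable F x 1.
  by apply: derivableM; [exact: derivable_cst | exact: exprn_derivable].
have cF x : F @ x --> F x.
  by apply: differentiable_continuous; rewrite -derivable1_diffP.
rewrite /Rintegral (@continuous_FTC2 _ _ F) //.
- by rewrite /F /= -mulrBr mulrC.
- apply: continuous_subspaceT => x; apply: differentiable_continuous.
  by rewrite -derivable1_diffP; exact: exprn_derivable.
- split; [by move=> ? _ | exact: cvg_at_right_filter | exact: cvg_at_left_filter].
- move=> x _; rewrite /F derive1Ml; last exact: exprn_derivable.
  by rewrite exp_derive1 /= mulrA mulVf ?mul1r.
Qed.

End interval_integrals.

Lemma nondecreasing_blocks_deviation_le {R : realFieldType}
    {a b x y ga gx gy gb I1 I2 I3 : R} :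
  x + y = a + b -> a <= x -> x <= (a + b) / 2 ->
  ga <= gx -> gx <= gy -> gy <= gb ->
  ga * (x - a) <= I1 <= gx * (x - a) ->
  gx * (y - x) <= I2 <= gy * (y - x) ->
  gy * (b - y) <= I3 <= gb * (b - y) ->
  `|(b - a) * ((gx + gy) / 2) - (I1 + (I2 + I3))|
    <= (1 / 4 * (b - a) + `|x - (3 * a + b) / 4|) * (gb - ga).
Proof.
move=> exy ax xm gax gxy gyb /andP[I1l I1u] /andP[I2l I2u] /andP[I3l I3u].
have y_def : y = a + b - x by lra.
subst y; have [h|h] := lerP 0 (x - (3 * a + b) / 4).
- rewrite (ger0_norm h); apply/ler_normlP; split.
  + have h1 : 0 <= (b - a - 2 * (x - a)) / 2 * (gx - ga) by apply: mulr_ge0; lra.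
    have h2 : 0 <= (x - a - (b - a - 2 * (x - a)) / 2) * (gy - ga) by apply: mulr_ge0; lra.
    lra.
  + have h1 : 0 <= (b - a - 2 * (x - a)) / 2 * (gb - gy) by apply: mulr_ge0; lra.
    have h2 : 0 <= (x - a - (b - a - 2 * (x - a)) / 2) * (gb - gx) by apply: mulr_ge0; lra.
    lra.
- rewrite (ltr0_norm h); apply/ler_normlP; split.
  + have h1 : 0 <= (b - a - 2 * (x - a)) / 2 * (gx - ga) by apply: mulr_ge0; lra.
    have h2 : 0 <= ((b - a - 2 * (x - a)) / 2 - (x - a)) * (gb - gy) by apply: mulr_ge0; lra.
    lra.
  + have h1 : 0 <= (b - a - 2 * (x - a)) / 2 * (gb - gy) by apply: mulr_ge0; lra.
    have h2 : 0 <= ((b - a - 2 * (x - a)) / 2 - (x - a)) * (gx - ga) by apply: mulr_ge0; lra.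
    lra.
Qed.

Section deviation.
Context {R : realType}.
Notation mu := (@lebesgue_measure R).

Lemma devi_le_nondecreasing (g : R -> R) a b x :
  a < b -> a <= x <= (a + b) / 2 -> {within `[a, b], continuous g} ->
  {in `[a, b] &, {homo g : u v / u <= v}} ->
  devi a b g x <= brack (1 / 4) a b x * slopeS a b g.
Proof.
move=> ab /andP[ax xm] cg g_homo; set y := a + b - x.
have gle u v : a <= u -> u <= v -> v <= b -> g u <= g v.
  by move=> au uv vb; apply: g_homo => //; rewrite in_itv /=; apply/andP; split; lra.
have csub u v : a <= u -> v <= b -> {within `[u, v], continuous g}.
  by move=> au vb; apply: continuous_subspaceW cg; apply: subset_itvScc; rewrite bnd_simp.
have block u v : a <= u -> u <= v -> v <= b ->
    g u * (v - u) <= \int[mu]_(t in `[u, v]) g t <= g v * (v - u).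
  move=> au uv vb; apply: Rintegral_cc_bounds => // [|t /andP[ut tv]].
    exact: csub.
  by apply/andP; split; apply: gle; lra.
have xb : x <= b by lra.
have xy : x <= y by rewrite /y; lra.
have yb : y <= b by rewrite /y; lra.
rewrite /devi /brack /slopeS (Rintegral_cc_split ax xb cg).
rewrite (Rintegral_cc_split xy yb (csub _ _ ax (lexx b))).
have B1 := block _ _ (lexx a) ax xb.
have B2 := block _ _ ax xy yb.
have B3 := block _ _ (le_trans ax xy) yb (lexx b).
have := nondecreasing_blocks_deviation_le (subrKC x (a + b)) ax xm
  (gle _ _ (lexx a) ax xb) (gle _ _ ax xy yb) (gle _ _ (le_trans ax xy) yb (lexx b))
  B1 B2 B3.
set D := (b - a) * _ - _ => D_le.
have ba0 : 0 < b - a by lra.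
rewrite -/y mulrA.
have -> : (g x + g y) / 2 - (b - a)^-1 * (\int[mu]_(t in `[a, x]) g t +
    (\int[mu]_(t in `[x, y]) g t + \int[mu]_(t in `[y, b]) g t)) = D / (b - a).
  by rewrite /D; field; lra.
by rewrite normrM normfV (gtr0_norm ba0) ler_wpM2r // invr_ge0 ltW.
Qed.

Definition tilt (s k : R) (f : R -> R) (t : R) : R := s * f t - k * t.

Lemma continuous_tilt (s k : R) {f : R -> R} {a b : R} : {within `[a, b], continuous f} ->
  {within `[a, b], continuous tilt s k f}.
Proof.
move=> cf; have cc (c : R) : {within `[a, b], continuous cst c}.
  by apply: continuous_subspaceT => z; exact: cvg_cst.
have cid : {within `[a, b], continuous (@id R)}.
  by apply: continuous_subspaceT => z; exact: cvg_id.
by move=> z; apply: cvgB; apply: cvgM; [exact: cc | exact: cf | exact: cc | exact: cid].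
Qed.

Lemma is_derive_tilt (s k : R) {f : R -> R} {z : R} : derivable f z 1 ->
  is_derive z (1 : R) (tilt s k f) (s * derive1 f z - k).
Proof.
move=> /derivableP df; apply: trigger_derive.
by rewrite derive1E -[k%:A]/(k * 1) mulr1.
Qed.

Lemma slopeS_tilt (s k : R) (f : R -> R) (a b : R) : a < b ->
  slopeS a b (tilt s k f) = s * slopeS a b f - k.
Proof. by move=> ab; rewrite /slopeS /tilt; field; rewrite subr_eq0 gt_eqF. Qed.

Lemma devi_tilt (s k : R) (f : R -> R) (a b x : R) : a < b -> {within `[a, b], continuous f} ->
  devi a b (tilt s k f) x = `|s| * devi a b f x.
Proof.
move=> ab cf; rewrite /devi -normrM; congr `|_|.
have cid : {within `[a, b], continuous (@id R)}.
  by apply: continuous_subspaceT => z; exact: cvg_id.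
have ci (c : R) (h : R -> R) : {within `[a, b], continuous h} ->
    mu.-integrable `[a, b] (EFin \o (fun t => c * h t)).
  move=> ch; apply: continuous_cc_integrable => z.
  by apply: cvgM; [exact: cvg_cst | exact: ch].
rewrite /tilt RintegralB ?ci // !RintegralZl ?continuous_cc_integrable //.
have -> : \int[mu]_(t in `[a, b]) t = (b ^+ 2 - a ^+ 2) / 2.
  by rewrite -Rintegral_cc_exprn //; apply: eq_Rintegral => t _; rewrite expr1.
by rewrite !expr2; field; rewrite subr_eq0 gt_eqF.
Qed.

Lemma devi_le_derive1_lbound (s k : R) {f : R -> R} {a b x : R} :
  a < b -> a <= x <= (a + b) / 2 -> {within `[a, b], continuous f} ->
  (forall z, a < z < b -> derivable f z 1) ->
  (forall z, a < z < b -> k <= s * derive1 f z) ->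
  `|s| * devi a b f x <= brack (1 / 4) a b x * (s * slopeS a b f - k).
Proof.
move=> ab xab cf df fk.
have cg := continuous_tilt s k cf.
rewrite -(devi_tilt s k) // -slopeS_tilt //; apply: devi_le_nondecreasing => //.
apply: ger0_derive1_le_cc => // z; rewrite in_itv /= => zab;
  have hd := is_derive_tilt s k (df z zab); first exact: ex_derive.
by rewrite derive1E derive_val subr_ge0 fk.
Qed.
End deviation.

Section derivative_range.
Context {R : realType} {f : R -> R} {a b M : R}.
Hypothesis ab : a < b.
Hypothesis cf : {within `[a, b], continuous f}.
Hypothesis df : forall z, a < z < b -> derivable f z 1.
Hypothesis dfM : forall z, a < z < b -> `|derive1 f z| <= M.

Let D := [set derive1 f t | t in `]a, b[].

Lemma exists_derive1_eq_slopeS : exists2 t, a < t < b & derive1 f t = slopeS a b f.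
Proof.
have hd z : z \in `]a, b[ -> is_derive z 1 f (derive1 f z).
  by rewrite in_itv /= => /df /derivableP; rewrite derive1E.
have [t] := MVT ab hd cf; rewrite in_itv /= => tab ftab.
by exists t => //; rewrite /slopeS ftab mulfK // subr_eq0 gt_eqF.
Qed.

Let D_lbound : has_lbound D.
Proof.
by exists (- M) => y [t]; rewrite /= in_itv /= => /dfM /ler_normlP[lo _] <-; rewrite lerNl.
Qed.

Let D_ubound : has_ubound D.
Proof. by exists M => y [t]; rewrite /= in_itv /= => /dfM /ler_normlP[_ hi] <-. Qed.

Lemma derive1_between_infD_supD z : a < z < b -> infD a b f <= derive1 f z <= supD a b f.
Proof.
move=> zab; have Dz : D (derive1 f z) by exists z; rewrite ?in_itv.
by rewrite (ge_inf D_lbound Dz) (ub_le_sup D_ubound Dz).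
Qed.

Lemma infD_le_slopeS : infD a b f <= slopeS a b f.
Proof.
have [t tab <-] := exists_derive1_eq_slopeS.
by have /andP[] := derive1_between_infD_supD _ tab.
Qed.

Lemma slopeS_le_supD : slopeS a b f <= supD a b f.
Proof.
have [t tab <-] := exists_derive1_eq_slopeS.
by have /andP[] := derive1_between_infD_supD _ tab.
Qed.

Lemma thm_hyp_infD_supD : lebesgue_measure.-integrable `[a, b] (EFin \o derive1 f) ->
  thm_hyp a b f (infD a b f) (supD a b f).
Proof. by split => //; exact: derive1_between_infD_supD. Qed.

End derivative_range.

Section power_example.
Context {R : realType} {k : R} {n : nat}.
Hypothesis n_gt0 : (0 < n)%N.
Let p (t : R) : R := k * t ^+ n.

Let p_derivable t : derivable p t 1.
Proof. by apply: derivableM; [exact: derivable_cst | exact: exprn_derivable]. Qed.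

Let continuous_p u v : {within `[u, v], continuous p}.
Proof. by apply: derivable_within_continuous => z _; exact: p_derivable. Qed.

Lemma derive1_power t : derive1 p t = k * (n%:R * t ^+ n.-1).
Proof. by rewrite /p derive1Ml ?exp_derive1 //; exact: exprn_derivable. Qed.

Let p_derivable_in t : 0 < t < 1 -> derivable p t 1.
Proof. by move=> _; exact: p_derivable. Qed.

Let p_derive1_bound t : 0 < t < 1 -> `|derive1 p t| <= `|k| * n%:R.
Proof.
move=> /andP[t0 t1]; rewrite derive1_power normrM ler_wpM2l //.
rewrite normrM ger0_norm // ler_piMr // normrX exprn_ile1 //.
by rewrite ger0_norm ltW.
Qed.

Lemma thm_hyp_power : thm_hyp 0 1 p (infD 0 1 p) (supD 0 1 p).
Proof.
apply: (thm_hyp_infD_supD ltr01 (continuous_p 0 1) p_derivable_in p_derive1_bound).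
rewrite (_ : derive1 p = fun t => k * (n%:R * t ^+ n.-1)); last first.
  by apply/funext => t; exact: derive1_power.
apply: continuous_cc_integrable; apply: derivable_within_continuous => z _.
by do 2!(apply: derivableM; first exact: derivable_cst); exact: exprn_derivable.
Qed.

Lemma slopeS_power : slopeS 0 1 p = k.
Proof. by rewrite /slopeS /p expr1n expr0n gtn_eqF //= mulr0 mulr1 !subr0 divr1. Qed.

Lemma infD_power_le : infD 0 1 p <= k.
Proof.
by rewrite -slopeS_power (infD_le_slopeS ltr01 (continuous_p 0 1) p_derivable_in p_derive1_bound).
Qed.

Lemma supD_power_ge : k <= supD 0 1 p.
Proof.
by rewrite -slopeS_power (slopeS_le_supD ltr01 (continuous_p 0 1) p_derivable_in p_derive1_bound).
Qed.

Lemma devi_power : devi 0 1 p 0 = `|k| * (2^-1 - n.+1%:R^-1).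
Proof.
have int_p : \int[lebesgue_measure]_(t in `[0, 1]) p t = k / n.+1%:R.
  rewrite /p RintegralZl ?continuous_cc_integrable ?Rintegral_cc_exprn //.
    by rewrite expr1n expr0n /= subr0 mul1r.
  by apply: derivable_within_continuous => z _; exact: exprn_derivable.
rewrite /devi int_p /p subr0 add0r expr1n expr0n gtn_eqF //= mulr0 add0r mulr1.
rewrite subr0 invr1 mul1r -mulrBr normrM; congr (_ * _); apply: ger0_norm.
by rewrite subr_ge0 lef_pV2 ?posrE // ler_nat ltnS.
Qed.

Let p_derive1_range_neq0 : [set derive1 p t | t in `]0, 1[] !=set0.
Proof. by exists (derive1 p 2^-1), 2^-1 => //; rewrite /= in_itv /=; apply/andP; split; lra. Qed.

Lemma infD_power_ge0 : 0 <= k -> 0 <= infD 0 1 p.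
Proof.
move=> k0; apply: lb_le_inf => // y [t].
rewrite /= in_itv /= => /andP[t0 _] <-.
by rewrite derive1_power mulr_ge0 // mulr_ge0 // exprn_ge0 // ltW.
Qed.

Lemma supD_power_le0 : k <= 0 -> supD 0 1 p <= 0.
Proof.
move=> k0; apply: ge_sup => // y [t].
rewrite /= in_itv /= => /andP[t0 _] <-.
by rewrite derive1_power mulr_le0_ge0 // mulr_ge0 // exprn_ge0 // ltW.
Qed.

End power_example.

Lemma exists_natSinv_lt (R : archiFieldType) (e : R) : 0 < e ->
  exists2 n : nat, (0 < n)%N & n.+1%:R^-1 < e.
Proof.
move=> e0; exists (Num.truncn e^-1).+1 => //.
rewrite -[X in _ < X]invrK ltf_pV2 ?posrE ?invr_gt0 ?ltr0n //.
by apply: lt_le_trans (truncnS_gt _) _; rewrite ler_nat.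
Qed.

Lemma brack_at_left_end (R : realType) (c : R) : brack c 0 1 0 = c + 1 / 4.
Proof. by rewrite /brack subr0 mulr1 mulr0 !add0r normrN ger0_norm //; lra. Qed.

Lemma quarter_sharpness_gap (R : realFieldType) (c d e : R) :
  e < 1 / 4 - c -> e < 1 / 4 -> 0 <= d <= 1 -> (c + 1 / 4) * d < 2^-1 - e.
Proof.
move=> ec e4 /andP[d0 d1]; have [c4|c4] := lerP 0 (c + 1 / 4).
- have : 0 <= (c + 1 / 4) * (1 - d) by apply: mulr_ge0; lra.
  lra.
- have : 0 <= - (c + 1 / 4) * d by apply: mulr_ge0; lra.
  lra.
Qed.

Lemma quarter_sharp_lower (R : realType) (c : R) : c < 1 / 4 ->
  exists (a b : R) (f : R -> R) (x : R),
    thm_hyp a b f (infD a b f) (supD a b f) /\ a <= x <= (a + b) / 2 /\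
    brack c a b x * (slopeS a b f - infD a b f) < devi a b f x.
Proof.
move=> c4; have [|n n0] := @exists_natSinv_lt _ (Num.min (1 / 4 - c) (1 / 4)).
  by rewrite lt_min; apply/andP; split; lra.
rewrite lt_min => /andP[nc n4].
exists 0, 1, (fun t => 1 * t ^+ n), 0; split; first exact: thm_hyp_power.
split; first by apply/andP; split; lra.
rewrite slopeS_power // devi_power // normr1 mul1r brack_at_left_end.
apply: quarter_sharpness_gap nc n4 _.
have := @infD_power_ge0 R 1 n ler01; have := @infD_power_le R 1 n n0.
by move=> *; apply/andP; split; lra.
Qed.

Lemma quarter_sharp_upper (R : realType) (c : R) : c < 1 / 4 ->
  exists (a b : R) (f : R -> R) (x : R),
    thm_hyp a b f (infD a b f) (supD a b f) /\ a <= x <= (a + b) / 2 /\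
    brack c a b x * (supD a b f - slopeS a b f) < devi a b f x.
Proof.
move=> c4; have [|n n0] := @exists_natSinv_lt _ (Num.min (1 / 4 - c) (1 / 4)).
  by rewrite lt_min; apply/andP; split; lra.
rewrite lt_min => /andP[nc n4].
exists 0, 1, (fun t => -1 * t ^+ n), 0; split; first exact: thm_hyp_power.
split; first by apply/andP; split; lra.
rewrite slopeS_power // devi_power // normrN normr1 mul1r brack_at_left_end.
apply: quarter_sharpness_gap nc n4 _.
have := @supD_power_le0 R (-1) n (lerN10 R); have := @supD_power_ge R (-1) n n0.
by move=> *; apply/andP; split; lra.
Qed.

Theorem theorem2p1 (R : realType) :
  (forall (a b : R) (f : R -> R) (gamma Gamma : R),
     thm_hyp a b f gamma Gamma ->
     forall x, a <= x <= (a + b) / 2 ->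
       devi a b f x <= brack (1 / 4) a b x * (slopeS a b f - gamma) /\
       devi a b f x <= brack (1 / 4) a b x * (Gamma - slopeS a b f)) /\
  (forall c : R, c < 1 / 4 ->
     (exists (a b : R) (f : R -> R) (x : R),
        thm_hyp a b f (infD a b f) (supD a b f) /\ a <= x <= (a + b) / 2 /\
        brack c a b x * (slopeS a b f - infD a b f) < devi a b f x) /\
     (exists (a b : R) (f : R -> R) (x : R),
        thm_hyp a b f (infD a b f) (supD a b f) /\ a <= x <= (a + b) / 2 /\
        brack c a b x * (supD a b f - slopeS a b f) < devi a b f x)).
Proof.
split=> [a b f gamma Gamma [ab cf df _ f'_bounds] x xab | c c4]; last first.
  by split; [exact: quarter_sharp_lower | exact: quarter_sharp_upper].
split.
- have := devi_le_derive1_lbound 1 gamma ab xab cf df.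
  rewrite normr1 !mul1r; apply => // z /f'_bounds /andP[+ _].
  by rewrite mul1r.
- have := devi_le_derive1_lbound (-1) (- Gamma) ab xab cf df.
  rewrite normrN normr1 mul1r mulN1r opprK addrC; apply => // z /f'_bounds /andP[_ +].
  by rewrite mulN1r lerN2.
Qed.
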